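(* Let $b\geq2$ and even, $k\leq n-2$ and $\mathbf s=s_1s_2\ldots s_k$. If $\mathbf t$ is the first sequence in $\mathbf s\,|\,R_n(b)$ when this set is listed in co-Reflected Gray Code Order, then $\mathbf t$ has one of the following forms: 1. $\mathbf t=\mathbf sM0\ldots0$ if $U_{k+1}$ is odd and $M$ is even, 2. $\mathbf t=\mathbf sM(M+1)0\ldots0$ if $U_{k+1}$ is odd and $M$ is odd, 3. $\mathbf t=\mathbf s0\ldots0$ if $U_{k+1}$ is even, where $M=\min\{b,\max\{s_i\}_{i=1}^k+1\}$ and $U_{k+1}=\sum_{i=1}^k[s_i\neq0 \text{ and } s_i \text{ is even}]$.
   Context: A restricted growth function of length $n$ is an integer sequence $s_1s_2\ldots s_n$ with $s_1=0$ and $0\leq s_{i+1}\leq \max\{s_j\}_{j=1}^i+1$ for $1\leq i\leq n-1$; $R_n$ is the set of these, and for $b\geq1$, $R_n(b)=\{s_1\ldots s_n\in R_n : \max\{s_i\}_{i=1}^n\leq b\}$. For a sequence $\mathbf u$, $\mathbf u\,|\,S$ denotes the subset of $S$ of sequences having prefix $\mathbf u$. The co-Reflected Gray Code Order on $\{0,1,\ldots,m-1\}^n$ ($m\geq2$) is defined by: $s_1\ldots s_n$ is less than $t_1\ldots t_n$ if, for the position $k$ with $s_i=t_i$ ($1\leq i\leq k-1$) and $s_k\neq t_k$, either $U_k$ is even and $s_k<t_k$, or $U_k$ is odd and $s_k>t_k$, where $U_k=|\{i\in\{1,\ldots,k-1\}: s_i\neq0,\ s_i \text{ even}\}|$. $[P]$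 denotes the Iverson bracket (1 if $P$ is true, 0 otherwise). *)

(* Sequences are `seq nat`, positions 1-based in the paper,
   0-based here (nth 0 s i = s_{i+1}). *)
From mathcomp Require Import all_boot.
Set Implicit Arguments. Unset Strict Implicit. Unset Printing Implicit Defensive.

Definition seqmax (s : seq nat) : nat := foldr maxn 0 s.

Definition is_rgf (n : nat) (s : seq nat) : bool :=
  [&& size s == n, nth 0 s 0 == 0 &
      [forall i : 'I_n, (0 < i) ==> (nth 0 s i <= (seqmax (take i s)).+1)]].

Definition in_Rnb (n b : nat) (s : seq nat) : bool :=
  is_rgf n s && (seqmax s <= b).

(* u | S : the sequences of S having prefix u *)
Definition has_prefix (u s : seq nat) : bool := take (size u) s == u.

(* U_{k+1} = number of i in {1..k} with s_i <> 0 and s_i even *)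
Definition Ucount (s : seq nat) (k : nat) : nat :=
  count (fun x => (x != 0) && ~~ odd x) (take k s).

(* The first differing position is (0-based) k, i.e. paper position k+1, and
   U_{k+1} counts the nonzero even entries among the first k entries. *)
Definition corgc_lt (s t : seq nat) : Prop :=
  size s = size t /\
  exists k, k < size s /\ take k s = take k t /\ nth 0 s k <> nth 0 t k /\
    ((~~ odd (Ucount s k) /\ nth 0 s k < nth 0 t k) \/
     (odd (Ucount s k) /\ nth 0 s k > nth 0 t k)).

Definition first_in_prefix_class (n b : nat) (u t : seq nat) : Prop :=
  in_Rnb n b t /\ has_prefix u t /\
  forall v, in_Rnb n b v -> has_prefix u v -> v <> t -> corgc_lt t v.

(* Two sequences are compared in co-RGC order at their first difference, in a
   direction fixed by the common prefix (increasing when U is even, decreasing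
   when U is odd).  So the first element of s | R_n(b) is built greedily: after
   each prefix take the admissible value that comes first in the current
   direction, i.e. 0 if U is even and the largest admissible value
   min(b, max + 1) if U is odd.  Right after s that value is M.  A nonzero even
   M makes U even, so only zeros follow; an odd M leaves U odd, and since b is
   even M < b, so M + 1 (even) is the largest admissible next value, after
   which U is even again. *)

From mathcomp Require Import all_boot zify.

Set Implicit Arguments.
Unset Strict Implicit.
Unset Printing Implicit Defensive.

Definition nz_even (x : nat) : bool := (x != 0) && ~~ odd x.

Lemma UcountE (s : seq nat) (k : nat) : Ucount s k = count nz_even (take k s).
Proof. by []. Qed.

Lemma seqmax_cons (x : nat) (s : seq nat) : seqmax (x :: s) = maxn x (seqmax s).
Proof. by []. Qed.

Lemma seqmax_cat (s1 s2 : seq nat) : seqmax (s1 ++ s2) = maxn (seqmax s1) (seqmax s2).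
Proof.
elim: s1 => [|x s1 IHs]; first by rewrite max0n.
by rewrite cat_cons !seqmax_cons IHs maxnA.
Qed.

Lemma seqmax_leq (s : seq nat) (m : nat) : (seqmax s <= m) = all (leq^~ m) s.
Proof. by elim: s => // x s IHs; rewrite seqmax_cons geq_max IHs. Qed.

Definition rgf_next (b : nat) (p : seq nat) (x : nat) : bool :=
  if p is [::] then x == 0 else x <= minn b (seqmax p).+1.

Lemma rgf_next_nonnil (b : nat) (p : seq nat) (x : nat) : p != [::] ->
  rgf_next b p x = (x <= b) && (x <= (seqmax p).+1).
Proof. by case: p => [|y p] // _; rewrite /= leq_min. Qed.

Lemma in_RnbP (n b : nat) (v : seq nat) :
  in_Rnb n b v <-> size v = n /\ forall j, j < n -> rgf_next b (take j v) (nth 0 v j).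
Proof.
have take_nonnil j : j < size v -> take j.+1 v != [::] by case: v.
split.
- case/andP=> /and3P[/eqP szv v0 /forallP grow]; rewrite seqmax_leq => /all_nthP vb.
  split=> // -[|j] jn; first by rewrite take0.
  have jv : j < size v by rewrite szv ltnW.
  have := grow (Ordinal jn).
  by rewrite rgf_next_nonnil ?take_nonnil //= vb // szv.
- case=> szv next; apply/andP; split; last first.
    rewrite seqmax_leq; apply/(all_nthP 0) => -[|j] jn; rewrite szv in jn.
      by have := next 0 jn; rewrite take0 => /eqP->.
    have jv : j < size v by rewrite szv ltnW.
    by have := next _ jn; rewrite rgf_next_nonnil ?take_nonnil // => /andP[].
  apply/and3P; split; first by apply/eqP.
    case: n next szv => [|n] next szv; first by rewrite (size0nil szv).
    by have := next 0 isT; rewrite take0.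
  apply/forallP=> -[[|j] jn] //=.
  have jv : j < size v by rewrite szv ltnW.
  by have := next _ jn; rewrite rgf_next_nonnil ?take_nonnil // => /andP[].
Qed.

Definition corgc_first_next (b : nat) (p : seq nat) (y : nat) : Prop :=
  rgf_next b p y /\
  forall x, rgf_next b p x -> if odd (count nz_even p) then x <= y else y <= x.

Lemma corgc_first_next0 (b : nat) (p : seq nat) :
  ~~ odd (count nz_even p) -> corgc_first_next b p 0.
Proof. by move=> /negbTE even_p; split=> [|x _]; rewrite ?even_p //; case: p {even_p}. Qed.

Lemma corgc_first_next_max (b : nat) (p : seq nat) :
  odd (count nz_even p) -> corgc_first_next b p (minn b (seqmax p).+1).
Proof. by case: p => [|y p] // odd_p; split=> [|x] /=; rewrite ?odd_p. Qed.

Lemma first_in_prefix_class_greedy (n b : nat) (s t r : seq nat) :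
  first_in_prefix_class n b s t -> size s + size r = n ->
  (forall d, d < size r -> corgc_first_next b (s ++ take d r) (nth 0 r d)) ->
  t = s ++ r.
Proof.
move=> [/in_RnbP[szt t_next] [/eqP pre t_first]] szn r_first.
have {pre} [r0 def_t] : exists r0, t = s ++ r0.
  by exists (drop (size s) t); rewrite -{1}pre cat_take_drop.
set c := s ++ r.
have take_c j : size s <= j -> take j c = s ++ take (j - size s) r.
  by move=> sj; rewrite take_cat ltnNge sj.
have nth_c j : size s <= j -> nth 0 c j = nth 0 r (j - size s).
  by move=> sj; rewrite nth_cat ltnNge sj.
have c_in : in_Rnb n b c.
  apply/in_RnbP; split=> [|j jn]; first by rewrite size_cat.
  case: (ltnP j (size s)) => sj; last first.
    by rewrite take_c // nth_c //; case: (r_first (j - size s)) => //; lia.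
  by have := t_next j jn; rewrite def_t !take_cat !nth_cat sj.
case: (eqVneq t c) => // tc; exfalso.
have c_pre : has_prefix s c by rewrite /has_prefix take_size_cat.
have [_ [j [jn [tk [ne ord]]]]] := t_first c c_in c_pre (nesym (elimN eqP tc)).
have sj : size s <= j.
  by rewrite leqNgt; apply: contra_notN ne => js; rewrite def_t !nth_cat js.
have jr : j - size s < size r by lia.
have := (r_first _ jr).2 (nth 0 t j).
rewrite -take_c // -nth_c // -tk t_next; last by rewrite -szt.
rewrite UcountE in ord.
by case: (odd _) ord => -[] [] // _ ord /(_ isT); lia.
Qed.

Lemma corgc_first_next_zeros (b : nat) (s q : seq nat) (m : nat) :
  (forall d, d < size q -> corgc_first_next b (s ++ take d q) (nth 0 q d)) ->
  ~~ odd (count nz_even (s ++ q)) ->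
  forall d, d < size (q ++ nseq m 0) ->
  corgc_first_next b (s ++ take d (q ++ nseq m 0)) (nth 0 (q ++ nseq m 0) d).
Proof.
move=> q_first even_sq d; rewrite size_cat size_nseq => dm.
case: (ltnP d (size q)) => dq; first by rewrite take_cat nth_cat dq; apply: q_first.
rewrite take_cat nth_cat ltnNge dq /= nth_nseq if_same catA.
by apply: corgc_first_next0; rewrite count_cat take_nseq ?count_nseq ?muln0 ?addn0 //; lia.
Qed.

Theorem proposition4 (b n : nat) (s t : seq nat) :
  2 <= b -> ~~ odd b -> size s + 2 <= n ->
  first_in_prefix_class n b s t ->
  let k := size s in
  let M := minn b (seqmax s).+1 in
  (odd (Ucount s k) -> ~~ odd M -> t = s ++ M :: nseq (n - k - 1) 0) /\
  (odd (Ucount s k) -> odd M -> t = s ++ M :: M.+1 :: nseq (n - k - 2) 0) /\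
  (~~ odd (Ucount s k) -> t = s ++ nseq (n - k) 0).
Proof.
move=> b_ge2 b_even szn t_first k M.
rewrite UcountE take_size.
split; [|split] => [odd_s M_even | odd_s M_odd | even_s].
- apply: (first_in_prefix_class_greedy t_first); first by rewrite /= size_nseq; lia.
  apply: (corgc_first_next_zeros (q := [:: M])) => [[|//] _|].
    by rewrite cats0; apply: corgc_first_next_max.
  have M_gt0 : 0 < M by rewrite leq_min ltn0Sn andbT ltnW.
  by rewrite count_cat oddD odd_s /= /nz_even M_even -lt0n M_gt0.
- have [M_def M_lt_b] : M = (seqmax s).+1 /\ M < b.
    have : M != b by apply: contraTneq M_odd => ->.
    rewrite /M; lia.
  apply: (first_in_prefix_class_greedy t_first); first by rewrite /= size_nseq; lia.
  apply: (corgc_first_next_zeros (q := [:: M; M.+1])) => [[|[|//]] _|] /=.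
  + by rewrite cats0; apply: corgc_first_next_max.
  + have -> : M.+1 = minn b (seqmax (s ++ [:: M])).+1.
      by rewrite seqmax_cat seqmax_cons maxn0 M_def; lia.
    by apply: corgc_first_next_max; rewrite count_cat oddD odd_s /= /nz_even M_odd andbF.
  + by rewrite count_cat oddD odd_s /= /nz_even /= M_odd andbF.
- apply: (first_in_prefix_class_greedy t_first); first by rewrite size_nseq; lia.
  by apply: (corgc_first_next_zeros (q := [::])); rewrite ?cats0.
Qed.
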